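(* For every positive integer $m$, let $\mathcal{G}^{r}_m$ be the set of all directed acyclic graphs on the labeled vertex set $[m]=\{1,\dots,m\}$ whose Markov equivalence class has exactly one element. Then $$2^{\frac{m(m-3)}{2}+1}\le |\mathcal{G}^{r}_m|\le m!\,2^{\frac{m(m-1)}{2}},$$ and in particular $\log|\mathcal{G}^{r}_m|\ge \left(\frac{m(m-3)}{2}+1\right)\log 2$.
   Context: Two DAGs on the same vertex set are Markov equivalent if they encode exactly the same conditional independence statements among the associated random variables (equivalently, they have the same skeleton and the same v-structures). The Markov equivalence class of $G$ is the set of DAGs Markov equivalent to $G$. *)

From mathcomp Require Import all_boot.
Set Implicit Arguments. Unset Strict Implicit. Unset Printing Implicit Defensive.

(* A directed graph on the vertex set 'I_m (= {0,...,m-1}, a relabelling of [m])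
   is given by its set of arcs: (x, y) \in G means x -> y. *)
Definition digraph (m : nat) := {set 'I_m * 'I_m}.

Definition arc m (G : digraph m) : rel 'I_m := fun x y => (x, y) \in G.

(* Acyclic: there is no directed cycle x -> y ->* x (this also excludes loops). *)
Definition is_dag m (G : digraph m) : bool :=
  [forall x : 'I_m, forall y : 'I_m, arc G x y ==> ~~ connect (arc G) y x].

Definition adjacent m (G : digraph m) (x y : 'I_m) : bool := arc G x y || arc G y x.

Definition vstruct m (G : digraph m) (a b c : 'I_m) : bool :=
  [&& arc G a b, arc G c b, a != c & ~~ adjacent G a c].

(* Markov equivalence, via the (Verma--Pearl) characterization given in the
   context: same skeleton and same v-structures. *)
Definition markov_equiv m (G H : digraph m) : bool :=
  [forall x : 'I_m, forall y : 'I_m, adjacent G x y == adjacent H x y] &&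
  [forall a : 'I_m, forall b : 'I_m, forall c : 'I_m,
      vstruct G a b c == vstruct H a b c].

Definition mec m (G : digraph m) : {set digraph m} :=
  [set H : digraph m | is_dag H && markov_equiv G H].

Definition Gr (m : nat) : {set digraph m} :=
  [set G : digraph m | is_dag G && (#|mec G| == 1)].

From mathcomp Require Import all_boot perm zify.
Set Implicit Arguments. Unset Strict Implicit. Unset Printing Implicit Defensive.

(* Upper bound: a DAG is determined by a topological order, i.e. a permutation
   of the vertices, together with the set of arcs it puts on the m(m-1)/2
   increasing pairs.

   Lower bound: call an arc x -> y protected if x has a parent not adjacent to
   y, or y has another parent not adjacent to x, or x -> z -> y for some z.
   If every arc of a DAG G is protected, a Markov equivalent DAG H must orient
   every arc as G does: by induction along a topological order, reversing
   x -> y in H would create a v-structure absent from G or a directed cycle.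
   Now take any DAG on the vertices 1, ..., m-1 whose arcs increase, and join
   the extra vertex 0 to exactly the vertices whose level (length of a longest
   path ending there) is odd.  Every arc of the result is protected, and
   distinct choices give distinct graphs, which yields 2^((m-1)(m-2)/2)
   graphs alone in their Markov equivalence class. *)

Definition forward_pairs m k : {set 'I_m * 'I_m} :=
  [set p : 'I_m * 'I_m | k <= p.1 < p.2].

Lemma card_ord_range m k j : j <= m -> #|[set i : 'I_m | k <= i < j]| = j - k.
Proof.
move=> le_jm; rewrite -sum1_card.
rewrite (eq_bigl (fun i : 'I_m => (k <= i) && (i < j))) => [|i]; last by rewrite inE.
rewrite -(big_ord_widen_cond _ (fun i => k <= i) (fun=> 1)) //.
by rewrite -[RHS]muln1 -sum_nat_const_nat big_geq_mkord.
Qed.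

Lemma sum_subn_bin2 m k : \sum_(j < m) (j - k) = 'C(m - k, 2).
Proof.
elim: m => [|m IH]; first by rewrite big_ord0.
rewrite big_ord_recr /= IH; case: (leqP k m) => [le_km | lt_mk].
  by rewrite subSn // binS bin1.
by have [-> ->] : m - k = 0 /\ m.+1 - k = 0 by lia.
Qed.

Lemma card_forward_pairs m k : #|forward_pairs m k| = 'C(m - k, 2).
Proof.
pose in_range (i j : 'I_m) : nat := (k <= i) && (i < j).
rewrite -sum1_card big_mkcond /= (eq_bigr (fun p => in_range p.1 p.2)) => [|p _]; last first.
  by rewrite inE /in_range; case: (_ && _).
rewrite -(pair_big xpredT xpredT in_range) exchange_big -sum_subn_bin2 /=.
apply: eq_bigr => j _; rewrite -(card_ord_range k (ltnW (ltn_ord j))).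
by rewrite -sum1_card [RHS]big_mkcond; apply: eq_bigr => i _; rewrite inE.
Qed.

Section Digraphs.
Variable m : nat.
Implicit Types (G H : digraph m) (x y z : 'I_m).

Lemma markov_equiv_refl G : markov_equiv G G.
Proof.
by apply/andP; split; do 2![apply/forallP => ?] => //; apply/forallP.
Qed.

Lemma markov_equiv_adjacent G H :
  markov_equiv G H -> forall x y, adjacent G x y = adjacent H x y.
Proof. by case/andP => /forallP + _ x y => /(_ x) /forallP /(_ y) /eqP. Qed.

Lemma markov_equiv_vstruct G H :
  markov_equiv G H -> forall x y z, vstruct G x y z = vstruct H x y z.
Proof.
by case/andP => _ /forallP + x y z => /(_ x) /forallP /(_ y) /forallP /(_ z) /eqP.
Qed.

Lemma dag_no_path_back G x y : is_dag G -> arc G x y -> ~~ connect (arc G) y x.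
Proof. by move=> /forallP /(_ x) /forallP /(_ y) /implyP. Qed.

Lemma dag_arc_asym G x y : is_dag G -> arc G x y -> ~~ arc G y x.
Proof. by move=> dagG /(dag_no_path_back dagG); apply: contra => ayx; apply: connect1. Qed.

Lemma forward_dag G : (forall x y, arc G x y -> x < y) -> is_dag G.
Proof.
move=> fwd; have path_le x y : connect (arc G) x y -> x <= y.
  case/connectP => p; elim: p x => [|z p IH] x /= => [_ -> // | /andP[axz pz] eq_y].
  exact: leq_trans (ltnW (fwd _ _ axz)) (IH z pz eq_y).
apply/forallP => x; apply/forallP => y; apply/implyP => axy.
by apply/negP => /path_le; rewrite leqNgt (fwd _ _ axy).
Qed.

Definition ancestors G y := [set x | connect (arc G) x y].

Lemma card_ancestors_lt G x y :
  is_dag G -> arc G x y -> #|ancestors G x| < #|ancestors G y|.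
Proof.
move=> dagG axy; apply/proper_card/properP; split.
  by apply/subsetP => z; rewrite !inE => /connect_trans; apply; apply: connect1.
by exists y; rewrite inE ?connect0 ?(dag_no_path_back dagG).
Qed.

Definition protected_arc G x y :=
  [\/ exists2 z, arc G z x & ~~ adjacent G z y,
      exists z, vstruct G x y z
    | exists2 z, arc G x z & arc G z y].

Lemma protected_by_parent G x y p :
  arc G x y -> arc G p y -> x != p -> ~~ arc G p x -> protected_arc G x y.
Proof.
move=> axy apy neq_xp npx; case axp: (arc G x p); first by apply: Or33; exists p.
by apply: Or32; exists p; rewrite /vstruct axy apy neq_xp /adjacent axp (negbTE npx).
Qed.

Section ProtectedUnique.
Variables G H : digraph m.
Hypotheses (dagG : is_dag G) (dagH : is_dag H) (GH : markov_equiv G H).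
Hypothesis protG : forall x y, arc G x y -> protected_arc G x y.

Let r y := #|ancestors G y|.

Let r_arc x y : arc G x y -> r x < r y.
Proof. exact: card_ancestors_lt. Qed.

Lemma protected_arc_kept x y : arc G x y -> arc H x y.
Proof.
have [k] := ubnP (r y); elim: k => // k IHk in x y *; rewrite ltnS => le_yk.
have [d] := ubnP (r y - r x); elim: d => // d IHd in x *; rewrite ltnS => le_d axy.
have IHlow u v : r v < r y -> arc G u v -> arc H u v.
  by move=> lt_vy; apply: IHk; apply: leq_trans le_yk.
have /orP[//|ayx] : adjacent H x y.
  by rewrite -(markov_equiv_adjacent GH) /adjacent axy.
exfalso; case: (protG axy) => [[z azx nzy] | [z vxyz] | [z axz azy]].
- have neq_zy : z != y by apply: contraTneq azx => ->; apply: dag_arc_asym axy.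
  have : vstruct H z x y.
    by rewrite /vstruct (IHlow _ _ (r_arc axy) azx) ayx neq_zy -(markov_equiv_adjacent GH).
  rewrite -(markov_equiv_vstruct GH) => /and4P[_ ayxG _ _].
  by move: (dag_arc_asym dagG axy); rewrite ayxG.
- move: vxyz; rewrite (markov_equiv_vstruct GH) => /and4P[axyH _ _ _].
  by move: (dag_arc_asym dagH axyH); rewrite ayx.
- have azyH : arc H z y.
    by apply: (IHd z _ azy); have := r_arc axz; have := r_arc azy; lia.
  move: (dag_no_path_back dagH (IHlow _ _ (r_arc azy) axz)).
  by rewrite (connect_trans (connect1 azyH) (connect1 ayx)).
Qed.

Lemma protected_markov_equiv_eq : H = G.
Proof.
apply/setP => -[x y]; change (arc H x y = arc G x y).
apply/idP/idP => [axyH | /protected_arc_kept //].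
have : adjacent G x y by rewrite (markov_equiv_adjacent GH) /adjacent axyH.
case/orP => // /protected_arc_kept ayxH.
by move: (dag_arc_asym dagH axyH); rewrite ayxH.
Qed.

End ProtectedUnique.

Lemma protected_dag_in_Gr G :
  is_dag G -> (forall x y, arc G x y -> protected_arc G x y) -> G \in Gr m.
Proof.
move=> dagG protG; rewrite inE dagG /=.
suff -> : mec G = [set G] by rewrite cards1.
apply/setP => H; rewrite !inE; apply/andP/eqP => [[dagH GH] | ->].
  exact: protected_markov_equiv_eq GH protG.
by rewrite dagG markov_equiv_refl.
Qed.

End Digraphs.

Section Levels.
Variables (m : nat) (S : {set 'I_m * 'I_m}).
Hypothesis S_forward : forall i j, (i, j) \in S -> i < j.

(* The length of a longest S-path ending at [j], computed with fuel [k];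
   since S-paths increase, any fuel [k > j] gives the same value. *)
Fixpoint level_iter k (j : 'I_m) : nat :=
  if k is k'.+1 then \max_(i | (i, j) \in S) (level_iter k' i).+1 else 0.

Definition level (j : 'I_m) := level_iter j.+1 j.

Lemma level_iter_stable k k' (j : 'I_m) : j < k -> j < k' -> level_iter k j = level_iter k' j.
Proof.
elim: k k' j => [//|k IH] [|k'] j lt_jk //= lt_jk'.
by apply: eq_bigr => i /S_forward lt_ij; congr _.+1; apply: IH; lia.
Qed.

Lemma levelE j : level j = \max_(i | (i, j) \in S) (level i).+1.
Proof.
by apply: eq_bigr => i /S_forward lt_ij; congr _.+1; apply: level_iter_stable.
Qed.

Lemma level_lt i j : (i, j) \in S -> level i < level j.
Proof. by move=> Sij; rewrite [level j]levelE; exact: leq_bigmax_cond. Qed.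

Lemma level_pred j : 0 < level j -> exists2 i, (i, j) \in S & (level i).+1 = level j.
Proof.
case: (pickP (fun i => (i, j) \in S)) => [i Sij | noS]; last by rewrite levelE big_pred0.
have parents : 0 < #|(fun i => (i, j) \in S)| by apply/card_gt0P; exists i.
have [i' Si'j eq_max] := eq_bigmax_cond (fun i => (level i).+1) parents.
by exists i'; rewrite // [level j]levelE eq_max.
Qed.

End Levels.

Section LowerBound.
Variables (n : nat) (S : {set 'I_n.+1 * 'I_n.+1}).
Hypothesis S_pairs : S \subset forward_pairs n.+1 1.
Implicit Types x y : 'I_n.+1.

Let S_pos i j : (i, j) \in S -> 0 < i < j.
Proof. by move/(subsetP S_pairs); rewrite inE. Qed.

Let S_forward i j : (i, j) \in S -> i < j.
Proof. by case/S_pos/andP. Qed.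

Local Notation lev := (level S).

Definition parity_completion : digraph n.+1 :=
  S :|: [set p | (p.1 == ord0) && odd (lev p.2)].

Local Notation PC := parity_completion.

Lemma arc_parity_completion x y :
  arc PC x y = ((x, y) \in S) || ((x == ord0) && odd (lev y)).
Proof. by rewrite /arc /parity_completion !inE. Qed.

Lemma parity_completion_forward x y : arc PC x y -> x < y.
Proof.
rewrite arc_parity_completion => /orP[/S_forward // | /andP[/eqP-> odd_y]].
rewrite lt0n; apply: contraTneq odd_y => y0.
by rewrite (levelE S_forward) big_pred0 // => i; apply/negP => /S_forward; rewrite y0.
Qed.

Lemma parity_completion_arc_to0 x : ~~ arc PC x ord0.
Proof. by apply/negP => /parity_completion_forward. Qed.

Lemma parity_completion_arc_from0 y : 0 < y -> arc PC ord0 y = odd (lev y).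
Proof.
move=> y_pos; rewrite arc_parity_completion eqxx orbC /=.
case S0y: ((ord0, y) \in S); last by rewrite orbF.
by have := S_pos S0y.
Qed.

Lemma arc_parity_completion_S x y : (x, y) \in S -> arc PC x y.
Proof. by rewrite arc_parity_completion => ->. Qed.

Lemma parity_completion_arc_level p x : arc PC p x -> 0 < p -> lev p < lev x.
Proof.
rewrite arc_parity_completion => /orP[/(level_lt S_forward) // | /andP[/eqP-> _]].
by rewrite ltnn.
Qed.

Lemma parity_completion_protected_same_parity x y :
  (x, y) \in S -> odd (lev x) = odd (lev y) -> protected_arc PC x y.
Proof.
move=> Sxy same_parity; have lt_xy := level_lt S_forward Sxy.
have [p Spy lev_py] := level_pred S_forward (leq_ltn_trans (leq0n _) lt_xy).
have lt_xp : lev x < lev p.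
  move: lt_xy; rewrite -lev_py ltnS leq_eqVlt => /orP[/eqP eq_xp|] //.
  by move: same_parity; rewrite -lev_py eq_xp /=; case: (odd _).
apply: (protected_by_parent (arc_parity_completion_S Sxy) (arc_parity_completion_S Spy)).
  by apply: contraTneq lt_xp => ->; rewrite ltnn.
have /andP[p_pos _] := S_pos Spy.
by apply/negP => /parity_completion_arc_level /(_ p_pos); rewrite ltnNge (ltnW lt_xp).
Qed.

Lemma parity_completion_protected_S x y : (x, y) \in S -> protected_arc PC x y.
Proof.
move=> Sxy; have axy := arc_parity_completion_S Sxy.
have /andP[x_pos lt_xy] := S_pos Sxy; have y_pos : 0 < y by apply: leq_trans lt_xy.
have x_neq0 : x != ord0 by apply: contraTneq x_pos => ->.
have [|diff_parity] := eqVneq (odd (lev x)) (odd (lev y)).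
  exact: parity_completion_protected_same_parity.
move: diff_parity; case odd_x: (odd (lev x)); case odd_y: (odd (lev y)) => // _.
  apply: Or31; exists ord0; first by rewrite parity_completion_arc_from0.
  by rewrite /adjacent parity_completion_arc_from0 // odd_y (negbTE (parity_completion_arc_to0 y)).
by apply: (protected_by_parent (p := ord0) axy); rewrite ?parity_completion_arc_from0 ?odd_x.
Qed.

Lemma parity_completion_protected x y : arc PC x y -> protected_arc PC x y.
Proof.
move=> axy; move: (axy); rewrite arc_parity_completion.
case/orP => [/parity_completion_protected_S // | /andP[/eqP x0 odd_y]].
have [|p Spy lev_py] := level_pred S_forward (_ : 0 < lev y); first by move: odd_y; case: (lev y).
have /andP[p_pos _] := S_pos Spy.
apply: (protected_by_parent axy (arc_parity_completion_S Spy)).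
  by rewrite x0; apply: contraTneq p_pos => <-.
by rewrite x0 parity_completion_arc_to0.
Qed.

Lemma parity_completion_in_Gr : PC \in Gr n.+1.
Proof.
apply: protected_dag_in_Gr parity_completion_protected.
exact: forward_dag parity_completion_forward.
Qed.

Lemma parity_completion_forward_part : PC :&: forward_pairs n.+1 1 = S.
Proof.
apply/setP => -[x y]; rewrite !inE /=.
case Sxy: ((x, y) \in S); first exact: S_pos Sxy.
by case: (x =P ord0) => [-> | _]; rewrite ?andbF.
Qed.

End LowerBound.

Lemma card_Gr_ge n : 2 ^ 'C(n, 2) <= #|Gr n.+1|.
Proof.
have -> : 'C(n, 2) = #|forward_pairs n.+1 1| by rewrite card_forward_pairs subn1.
rewrite -card_powerset -(card_in_imset (f := @parity_completion n)); last first.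
  move=> S1 S2; rewrite !inE => S1_pairs S2_pairs eq_PC.
  by rewrite -(parity_completion_forward_part S1_pairs) eq_PC parity_completion_forward_part.
apply/subset_leq_card/subsetP => _ /imsetP[S S_pairs ->].
by apply: parity_completion_in_Gr; rewrite inE in S_pairs.
Qed.

Section RankPermutation.
Variables (m : nat) (key : 'I_m -> nat).
Hypothesis key_inj : injective key.

Definition key_rank x := #|[set y | key y < key x]|.

Lemma key_rank_lt x y : key x < key y -> key_rank x < key_rank y.
Proof.
move=> lt_xy; apply/proper_card/properP; split.
  by apply/subsetP => z; rewrite !inE => /ltn_trans; apply.
by exists x; rewrite !inE ?lt_xy ?ltnn.
Qed.

Lemma key_rank_bound x : key_rank x < m.
Proof.
rewrite -[m]card_ord -cardsT; apply/proper_card/properP; split; first exact: subsetT.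
by exists x; rewrite !inE ?ltnn.
Qed.

Lemma key_rank_inj : injective (fun x => Ordinal (key_rank_bound x)).
Proof.
move=> x y [eq_rank]; apply: key_inj.
by case: (ltngtP (key x) (key y)) => // /key_rank_lt; rewrite eq_rank ltnn.
Qed.

Definition rank_perm : {perm 'I_m} := perm key_rank_inj.

Lemma rank_perm_lt x y : key x < key y -> rank_perm x < rank_perm y.
Proof. by rewrite !permE; apply: key_rank_lt. Qed.

End RankPermutation.

Section UpperBound.
Variable m : nat.
Implicit Types (G : digraph m) (s : {perm 'I_m}).

(* Ancestor counts increase along arcs; the vertex index breaks ties. *)
Definition topo_key G x := #|ancestors G x| * m + x.

Lemma topo_key_inj G : injective (topo_key G).
Proof.
move=> x y /(congr1 (modn^~ m)); rewrite /= !modnMDl !modn_small //.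
exact: val_inj.
Qed.

Definition topo_perm G := rank_perm (@topo_key_inj G).

Lemma topo_perm_lt G x y : is_dag G -> arc G x y -> topo_perm G x < topo_perm G y.
Proof.
move=> dagG axy; apply: rank_perm_lt; rewrite /topo_key.
apply: (@leq_trans (#|ancestors G y| * m)); last exact: leq_addr.
apply: (@leq_trans (#|ancestors G x|.+1 * m)); first by rewrite mulSnr ltn_add2l.
by rewrite leq_mul2r (card_ancestors_lt dagG axy) orbT.
Qed.

Definition relabel s G : digraph m := [set p | ((s^-1)%g p.1, (s^-1)%g p.2) \in G].

Lemma mem_relabel s G x y : ((s x, s y) \in relabel s G) = ((x, y) \in G).
Proof. by rewrite inE /= !permK. Qed.

Lemma relabel_inj s : injective (relabel s).
Proof.
by move=> G1 G2 eq_rel; apply/setP => -[x y]; rewrite -(mem_relabel s G1) -(mem_relabel s G2) eq_rel.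
Qed.

Lemma relabel_topo_forward G :
  is_dag G -> relabel (topo_perm G) G \subset forward_pairs m 0.
Proof.
move=> dagG; apply/subsetP => -[x y]; rewrite !inE /= => axy.
by have := topo_perm_lt dagG axy; rewrite !permKV.
Qed.

Lemma card_dags_le : #|[set G : digraph m | is_dag G]| <= m`! * 2 ^ 'C(m, 2).
Proof.
pose code G := (topo_perm G, relabel (topo_perm G) G).
have code_inj : injective code by move=> G1 G2 [-> /relabel_inj].
have card_codes : #|setX [set: {perm 'I_m}] (powerset (forward_pairs m 0))| = m`! * 2 ^ 'C(m, 2).
  by rewrite cardsX cardsT card_Sn card_powerset card_forward_pairs subn0.
rewrite -card_codes -(card_imset _ code_inj); apply/subset_leq_card/subsetP.
move=> _ /imsetP[G dagG ->]; rewrite inE in dagG.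
by rewrite !inE /=; apply: relabel_topo_forward.
Qed.

End UpperBound.

Lemma card_Gr_le m : #|Gr m| <= m`! * 2 ^ 'C(m, 2).
Proof.
apply: leq_trans (card_dags_le m); apply/subset_leq_card/subsetP => G.
by rewrite !inE => /andP[].
Qed.

Theorem lemma1 (m : nat) (hm : 0 < m) :
  2 ^ ((m.-1 * m.-2) %/ 2) <= #|Gr m| <= m`! * 2 ^ ((m * m.-1) %/ 2).
Proof.
case: m hm => [//|n] _; rewrite !divn2 -!bin2.
by rewrite card_Gr_ge card_Gr_le.
Qed.
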